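(* For an integer $\ell\ge 2$, let $G_\ell$ be the graph obtained from the disjoint union of $\ell$ copies of $K_3$ by adding one new vertex adjacent to all $3\ell$ vertices of these copies. Then $G_\ell$ is planar and $\dim_l(G_\ell)=2\ell$. Consequently, there exist connected planar graphs $G$ with $\dim_l(G)>\left\lceil \frac{n(G)+1}{2}\right\rceil$.
   Context: All graphs are finite and simple; $n(G)$ is the number of vertices. For vertices $x,y$ of a connected graph $G$, $d_G(x,y)$ is the length of a shortest $x,y$-path. A vertex $w$ distinguishes vertices $u,v$ if $d_G(u,w)\neq d_G(v,w)$. A set $W\subseteq V(G)$ is a local resolving set of $G$ if for every pair of adjacent vertices $u,v\in V(G)\setminus W$ some vertex of $W$ distinguishes $u$ and $v$. The local metric dimension $\dim_l(G)$ is the minimum cardinality of a local resolving set of $G$. *)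

From HB Require Import structures.
From mathcomp Require Import all_boot all_order all_algebra.
From mathcomp Require Import all_classical all_reals topology normedtype.
From mathcomp Require Import Rstruct Rstruct_topology.
Set Implicit Arguments. Unset Strict Implicit. Unset Printing Implicit Defensive.
Import Order.TTheory GRing.Theory Num.Theory.

Definition simple_graph (T : finType) (e : rel T) : Prop :=
  irreflexive e /\ symmetric e.

Definition graph_connected (T : finType) (e : rel T) : Prop :=
  forall x y : T, connect e x y.

Fixpoint reachn (T : finType) (e : rel T) (n : nat) (x y : T) : bool :=
  match n with
  | 0 => x == y
  | n'.+1 => reachn e n' x y || [exists z, reachn e n' x z && e z y]
  end.

(* d_G(x,y): least n such that there is an x,y-walk of length n (for a
   connected graph this is < #|T|). *)
Definition dist (T : finType) (e : rel T) (x y : T) : nat :=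
  find (fun n => reachn e n x y) (iota 0 #|T|).

Definition distinguishes (T : finType) (e : rel T) (w u v : T) : bool :=
  dist e u w != dist e v w.

Definition local_resolving (T : finType) (e : rel T) (W : {set T}) : bool :=
  [forall u, forall v,
     [&& u \notin W, v \notin W & e u v] ==>
     [exists w in W, distinguishes e w u v]].

(* local metric dimension: minimum cardinality of a local resolving set
   (V(G) itself is always one, so #|T| is a valid initial bound). *)
Definition local_metric_dim (T : finType) (e : rel T) : nat :=
  \big[minn/#|T|]_(W : {set T} | local_resolving e W) #|W|.

Local Open Scope classical_set_scope.
Local Open Scope ring_scope.

Definition planar (T : finType) (e : rel T) : Prop :=
  exists (p : T -> (Rdefinitions.R * Rdefinitions.R)%type) (arc : T -> T -> Rdefinitions.R -> (Rdefinitions.R * Rdefinitions.R)%type),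
    injective p /\
    (forall u v, e u v ->
       [/\ {within `[0, 1], continuous (arc u v)},
           {in `[0, 1] &, injective (arc u v)},
           arc u v 0 = p u, arc u v 1 = p v &
           forall t, 0 < t < 1 -> forall x, arc u v t != p x]) /\
    (forall u v u' v', e u v -> e u' v' -> [set u; v]%SET != [set u'; v']%SET ->
       forall s t : Rdefinitions.R, 0 <= s <= 1 -> 0 <= t <= 1 ->
         arc u v s = arc u' v' t -> exists x, arc u v s = p x).

(* G_l : l disjoint triangles plus an apex (None) adjacent to all 3l vertices *)
Definition Gl_vertex (l : nat) : finType := option ('I_l * 'I_3)%type.

Definition Gl_adj (l : nat) : rel (Gl_vertex l) :=
  fun x y =>
    match x, y with
    | None, None => false
    | None, Some _ => true
    | Some _, None => true
    | Some (i, a), Some (j, b) => (i == j) && (a != b)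
    end.

From mathcomp Require Import all_boot all_order all_algebra.
From mathcomp Require Import all_classical all_reals topology normedtype.
From mathcomp Require Import Rstruct Rstruct_topology ring lra zify.
Import Order.TTheory GRing.Theory Num.Theory.
Set Implicit Arguments. Unset Strict Implicit. Unset Printing Implicit Defensive.

(* The apex of G_l is universal, so distances are 0, 1 or 2 and are determined
   by adjacency.  Two vertices of one triangle are then adjacent twins: no third
   vertex distinguishes them, so a local resolving set contains two vertices of
   every triangle and dim_l(G_l) >= 2l.  Two vertices per triangle do suffice:
   the only remaining adjacent pairs are the apex with the third vertex of a
   triangle, and a chosen vertex of another triangle (here l >= 2 is needed) is
   at distance 1 from the apex and 2 from that vertex.
   For planarity, draw G_l first in an auxiliary plane where the apex is
   stretched into the vertical axis: triangle i has corners (2,3i), (1,3i+1),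
   (2,3i+2), all edges are straight segments, the apex edges being horizontal
   segments from the axis, and distinct segments meet only at common endpoints.
   The map (x, y) |-> (x, xy) is injective off the axis and collapses the axis
   to one point, the apex.
   For l = 4 we get n = 13 and ceil((n + 1) / 2) = 7 < 8 = dim_l(G_4). *)

Section UniversalVertex.
Variables (T : finType) (e : rel T).

Lemma dist_refl x : dist e x x = 0.
Proof. by rewrite /dist; case: #|T| => [|n] //=; rewrite eqxx. Qed.

Hypotheses (e_sym : symmetric e) (z : T) (z_universal : forall x, x != z -> e z x).

Lemma dist_edge x y : x != y -> e x y -> dist e x y = 1.
Proof.
move=> xy exy; have := max_card [set x; y]; rewrite cards2 xy /dist.
case: #|T| => [|[|n]] // _ /=; rewrite (negbTE xy) /=.
by have -> : [exists w, (x == w) && e w y] by apply/existsP; exists x; rewrite eqxx.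
Qed.

Lemma dist_non_edge x y : x != y -> ~~ e x y -> dist e x y = 2.
Proof.
move=> xy nexy.
have xz : x != z by apply: contraNneq nexy => xz; rewrite xz z_universal // -xz eq_sym.
have yz : y != z by apply: contraNneq nexy => yz; rewrite yz e_sym z_universal // -yz.
have : 2 < #|T| by apply/card_gt2P; exists x, y, z; rewrite xy yz eq_sym xz.
rewrite /dist; case: #|T| => [|[|[|n]]] // _ /=; rewrite (negbTE xy) /=.
have -> : [exists w, (x == w) && e w y] = false.
  by apply/existsP => -[w /andP[/eqP <-]]; exact/negP.
suff -> : [exists w, ((x == w) || [exists w', (x == w') && e w' w]) && e w y] by [].
apply/existsP; exists z; rewrite z_universal // andbT.
by apply/orP; right; apply/existsP; exists x; rewrite eqxx e_sym z_universal.
Qed.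

Lemma dist_universal x y :
  dist e x y = if x == y then 0 else if e x y then 1 else 2.
Proof.
case: eqVneq => [->|xy]; first exact: dist_refl.
by case: ifPn => exy; [apply: dist_edge | apply: dist_non_edge].
Qed.

Lemma local_resolving_twins (W : {set T}) u v :
  local_resolving e W -> e u v ->
  (forall w, w != u -> w != v -> e u w = e v w) -> (u \in W) || (v \in W).
Proof.
move=> /forallP /(_ u) /forallP /(_ v) /implyP resolve euv twins.
apply/negPn/negP; rewrite negb_or => /andP[uW vW].
have /existsP[w /andP[wW]] := resolve (introT and3P (And3 uW vW euv)).
have wu : w != u by apply: contraNneq uW => <-.
have wv : w != v by apply: contraNneq vW => <-.
rewrite /distinguishes !dist_universal (twins w wu wv) !(eq_sym _ w).
by rewrite (negbTE wu) (negbTE wv) eqxx.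
Qed.

End UniversalVertex.

Lemma card_pair_cover (T : finType) (S : {pred T}) :
  (forall a b, a != b -> (a \in S) || (b \in S)) -> #|T| <= #|S|.+1.
Proof.
move=> cover; rewrite -(cardC S) -addn1 leq_add2l.
apply/card_le1_eqP => a b; rewrite !inE => aS bS.
by apply/eqP; apply: contraNT aS => /cover; rewrite (negbTE bS).
Qed.

Lemma card_pred_prod (I J : finType) (A : {pred I * J}) :
  #|A| = \sum_i #|[pred j | (i, j) \in A]|.
Proof.
have -> : \sum_i #|[pred j | (i, j) \in A]| = \sum_i \sum_(j | (i, j) \in A) 1.
  by apply: eq_bigr => i _; rewrite sum1_card.
by rewrite -sum1_card pair_big_dep; apply: eq_bigl => -[i j].
Qed.

Section LocalMetricDimension.
Variable l : nat.
Local Notation G := (@Gl_adj l).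
Implicit Types (v : Gl_vertex l) (W : {set Gl_vertex l}).

Lemma Gl_adj_irrefl : irreflexive G.
Proof. by case=> [[i a]|] //=; rewrite !eqxx. Qed.

Lemma Gl_adj_sym : symmetric G.
Proof. by move=> [[i a]|] [[j b]|] //=; rewrite (eq_sym i) (eq_sym a). Qed.

Lemma apex_universal v : v != None -> G None v.
Proof. by case: v. Qed.

Lemma Gl_connected : graph_connected G.
Proof.
have to_apex v : connect G v None.
  by case: v => [[i a]|]; [apply: connect1 | exact: connect0].
have from_apex v : connect G None v.
  by case: v => [[i a]|]; [apply: connect1 | exact: connect0].
by move=> x y; exact: connect_trans (to_apex x) (from_apex y).
Qed.

(* Stated on [option ('I_l * 'I_3)] rather than [Gl_vertex l] so that it also
   rewrites distances between concrete vertices such as [None]. *)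
Lemma Gl_dist (u v : option ('I_l * 'I_3)) :
  dist G u v = if u == v then 0 else if G u v then 1 else 2.
Proof. exact: (dist_universal (T := Gl_vertex l) Gl_adj_sym apex_universal). Qed.

Lemma local_resolving_triangle W i a b : local_resolving G W -> a != b ->
  (Some (i, a) \in W) || (Some (i, b) \in W).
Proof.
move=> resolving ab.
apply: (local_resolving_twins (T := Gl_vertex l) Gl_adj_sym apex_universal resolving).
  by rewrite /= eqxx.
move=> [[j c]|] //= wa wb; case: (eqVneq i j) => [ij|] //=; subst j.
have ca : c != a by apply: contraNneq wa => ->.
have cb : c != b by apply: contraNneq wb => ->.
by rewrite ![_ == c]eq_sym ca cb.
Qed.

Lemma local_resolving_card W : local_resolving G W -> 2 * l <= #|W|.
Proof.
move=> resolving.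
have fiber_ge2 i : 2 <= #|[pred a | Some (i, a) \in W]|.
  have := @card_pair_cover _ [pred a | Some (i, a) \in W]
    (fun a b => @local_resolving_triangle W i a b resolving).
  by rewrite card_ord.
have -> : 2 * l = \sum_(i < l) 2 by rewrite sum_nat_const card_ord mulnC.
apply: (@leq_trans (\sum_(i < l) #|[pred a | Some (i, a) \in W]|)).
  by apply: leq_sum => i _; exact: fiber_ge2.
rewrite -[leqLHS](card_pred_prod [pred p | Some p \in W]).
have image_sub : Some @: [pred p | Some p \in W] \subset W.
  by apply/fintype.subsetP => _ /imsetP[p pW ->].
by apply: leq_trans (subset_leq_card image_sub); rewrite card_imset //; exact: Some_inj.
Qed.

Definition two_per_triangle : {set Gl_vertex l} :=
  Some @: [set p : 'I_l * 'I_3 | p.2 != ord_max].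

Lemma card_two_per_triangle : #|two_per_triangle| = 2 * l.
Proof.
rewrite card_imset; last exact: Some_inj.
rewrite card_pred_prod (eq_bigr (fun=> 2)) => [|i _].
  by rewrite sum_nat_const card_ord mulnC.
rewrite (@eq_card _ _ (predC1 ord_max)) => [|a]; first by rewrite cardC1 card_ord.
by rewrite !inE.
Qed.

Lemma local_resolving_two_per_triangle :
  1 < l -> local_resolving G two_per_triangle.
Proof.
move=> l_gt1; have other i : exists j : 'I_l, j != i.
  have : 0 < #|predC1 i| by rewrite cardC1 card_ord; lia.
  by case/card_gt0P => j; exists j.
have outside i a : Some (i, a) \notin two_per_triangle -> a = ord_max.
  by rewrite mem_imset ?inE ?negbK => [/eqP|] //; exact: Some_inj.
have apex_pair i : exists2 w, w \in two_per_triangle &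
    dist G None w != dist G (Some (i, ord_max)) w.
  have [j ji] := other i; exists (Some (j, ord0)); first by rewrite imset_f ?inE.
  by rewrite !Gl_dist /= [i == j]eq_sym (negbTE ji); case: ifP.
apply/forallP => u; apply/forallP => v; apply/implyP => /and3P[].
case: u => [[i a]|]; case: v => [[j b]|] //.
- by move=> /outside -> /outside ->; rewrite /= andbF.
- move=> /outside -> _ _; have [w wW dw] := apex_pair i.
  by apply/existsP; exists w; rewrite wW /distinguishes eq_sym.
- move=> _ /outside -> _; have [w wW dw] := apex_pair j.
  by apply/existsP; exists w; rewrite wW.
Qed.

Lemma Gl_local_metric_dim : 1 < l -> local_metric_dim G = 2 * l.
Proof.
move=> l_gt1; apply/eqP; rewrite eqn_leq /local_metric_dim -minEnat -!leEnat.
apply/andP; split.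
  rewrite -card_two_per_triangle; apply: bigmin_le_cond.
  exact: local_resolving_two_per_triangle.
apply: le_bigmin => [|W]; last exact: local_resolving_card.
by rewrite card_option card_prod !card_ord leEnat; lia.
Qed.

End LocalMetricDimension.

Section Planarity.
Local Open Scope ring_scope.
Local Notation R := Rdefinitions.R.

Definition segment (P Q : R * R) (t : R) : R * R :=
  (line_path P.1 Q.1 t, line_path P.2 Q.2 t).

Definition fan (z : R * R) : R * R := (z.1, z.1 * z.2).

Lemma segment0 P Q : segment P Q 0 = P.
Proof. by rewrite /segment !line_path0; case: P. Qed.

Lemma segment1 P Q : segment P Q 1 = Q.
Proof. by rewrite /segment !line_path1; case: Q. Qed.

Lemma continuous_line_path (a b : R) : continuous (line_path a b).
Proof.
have -> : line_path a b = (fun t => t * (b - a) + a).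
  by apply/funext => t; rewrite line_pathEl.
move=> t; apply: (@continuousD R R^o R (fun t => t * (b - a)) (fun=> a)).
  by apply: continuousM; [exact: cvg_id | exact: cvg_cst].
exact: cvg_cst.
Qed.

Lemma continuous_fan_segment P Q : continuous (fan \o segment P Q).
Proof.
move=> t; have x_cont := @continuous_line_path P.1 Q.1.
apply: (@cvg_pair _ _ _ _ (nbhs (line_path P.1 Q.1 t))
                      (nbhs (line_path P.1 Q.1 t * line_path P.2 Q.2 t))).
  exact: x_cont.
by apply: continuousM; [exact: x_cont | exact: continuous_line_path].
Qed.

Lemma fan_axis z : z.1 = 0 -> fan z = (0, 0).
Proof. by rewrite /fan => ->; rewrite mul0r. Qed.

Lemma fan_inj_off_axis z z' : z.1 != 0 -> fan z = fan z' -> z = z'.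
Proof. by case: z z' => [x y] [x' y'] /= x0 [<-] /(mulfI x0) <-. Qed.

Lemma injective_fan_segment P Q :
  P != Q -> (P.1 = Q.1 -> P.1 != 0) -> injective (fan \o segment P Q).
Proof.
move=> PQ vertical s t [] /=.
have [x_eq|x_neq] := eqVneq P.1 Q.1; last by move=> /(line_path_inj x_neq).
have y_neq : P.2 != Q.2.
  by apply: contraNneq PQ; case: P Q x_eq {vertical} => ? ? [? ?] /= -> ->.
by rewrite -x_eq line_path_flat /= => _ /(mulfI (vertical x_eq)) /(line_path_inj y_neq).
Qed.

Definition corner (a : 'I_3) : R * R := (if val a == 1%N then 1 else 2, (val a)%:R).

(* [k4_end c d] is the end at [c] of the edge [cd] of one block (the apex and
   a triangle, forming a K_4) in the auxiliary plane; the apex end of an edge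
   lies on the axis, at the height of the other end. *)
Definition k4_end (c d : option 'I_3) : R * R :=
  match c, d with
  | Some a, _ => corner a
  | None, Some b => (0, (val b)%:R)
  | None, None => (0, 0)
  end.

Definition k4_arc (c d : option 'I_3) : R -> R * R :=
  segment (k4_end c d) (k4_end d c).

Ltac case_k4 c := case: c => [[[|[|[|?]]] ?]|] //.

Lemma k4_ends_apart c d : c != d ->
  k4_end c d != k4_end d c /\ ((k4_end c d).1 = (k4_end d c).1 -> (k4_end c d).1 != 0).
Proof.
case_k4 c; case_k4 d; rewrite /= => _; split; try (apply/eqP; case; lra);
  move=> x_eq; apply/eqP; lra.
Qed.

Lemma corner_height a : 0 <= (corner a).2 <= 2.
Proof. by case: a => [[|[|[|?]]] ?] //=; apply/andP; split; lra. Qed.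

Lemma k4_arc_height c d t : c != d -> 0 <= t <= 1 -> 0 <= (k4_arc c d t).2 <= 2.
Proof.
move=> + /andP[t0 t1]; case_k4 c; case_k4 d;
  rewrite /k4_arc /segment /line_path /= => _; apply/andP; split; lra.
Qed.

Lemma k4_arc_interior c d t : c != d -> 0 < t < 1 ->
  0 < (k4_arc c d t).1 /\ forall a, k4_arc c d t != corner a.
Proof.
move=> + /andP[t0 t1]; case_k4 c; case_k4 d;
  rewrite /k4_arc /segment /line_path /= => _; split; try lra;
  case=> [[|[|[|?]]] ?] //=; apply/eqP; case; lra.
Qed.

Lemma k4_arc_cross c d c' d' s t : c != d -> c' != d' ->
  ~~ ((c == c') && (d == d')) -> ~~ ((c == d') && (d == c')) ->
  0 <= s <= 1 -> 0 <= t <= 1 -> k4_arc c d s = k4_arc c' d' t -> s = 0 \/ s = 1.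
Proof.
move=> + + + + /andP[s0 s1] /andP[t0 t1].
case_k4 c; case_k4 d; case_k4 c'; case_k4 d';
  rewrite /k4_arc /segment /line_path /= => _ _ _ _ [E1 E2];
  first [by left; lra | by right; lra].
Qed.

Definition shift (n : nat) (P : R * R) : R * R := (P.1, 3 * n%:R + P.2).

Lemma segment_shift n P Q t :
  segment (shift n P) (shift n Q) t = shift n (segment P Q t).
Proof. by rewrite /segment /shift /line_path /=; congr pair; ring. Qed.

Lemma shift_injr n : injective (shift n).
Proof. by case=> [x y] [x' y'] [-> /addrI ->]. Qed.

Lemma shift_inj n n' P P' : 0 <= P.2 <= 2 -> 0 <= P'.2 <= 2 ->
  shift n P = shift n' P' -> n = n' /\ P = P'.
Proof.
move=> /andP[y0 y2] /andP[y0' y2'] [x_eq y_eq].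
have apart m m' : (m < m')%N -> 3 * m%:R + 2 < 3 * m'%:R :> R.
  move=> lt_mm'; suff : m%:R + 1 <= m'%:R :> R by lra.
  by rewrite natr1 ler_nat.
have n_eq : n = n' by case: (ltngtP n n') => // /apart ?; exfalso; lra.
split=> //; move: y_eq x_eq; rewrite n_eq => /addrI.
by case: P P' {y0 y2 y0' y2'} => [x y] [x' y'] /= -> ->.
Qed.

Section Drawing.
Variable l : nat.
Local Notation G := (@Gl_adj l).
Implicit Types (u v : Gl_vertex l).

(* The triangle of an edge; [(None, None)] is no edge and gets the junk 0. *)
Definition block u v : nat :=
  match u, v with
  | Some (i, _), _ | None, Some (i, _) => i
  | None, None => 0%N
  end.

Definition local u : option 'I_3 := omap snd u.

Definition aux_end u v : R * R := shift (block u v) (k4_end (local u) (local v)).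

Definition vertex_point u : R * R := fan (aux_end u u).

Definition edge_arc u v : R -> R * R :=
  fan \o segment (aux_end u v) (aux_end v u).

Lemma block_sym u v : G u v -> block v u = block u v.
Proof. by case: u v => [[i a]|] [[j b]|] //= /andP[/eqP ->]. Qed.

Lemma local_neq u v : G u v -> local u != local v.
Proof. by case: u v => [[i a]|] [[j b]|] //= /andP[_]. Qed.

Lemma vertex_of_block_local u v u' v' : G u v -> G u' v' ->
  block u v = block u' v' -> local u = local u' -> u = u'.
Proof. by case: u u' => [[i a]|] [[i' a']|] //= _ _ /val_inj -> [->]. Qed.

Lemma aux_segment u v t : G u v ->
  segment (aux_end u v) (aux_end v u) t =
  shift (block u v) (k4_arc (local u) (local v) t).
Proof. by move=> uv; rewrite /aux_end (block_sym uv) segment_shift. Qed.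

Lemma fan_aux_end u v : fan (aux_end u v) = vertex_point u.
Proof.
case: u => [[i a]|] //; rewrite /vertex_point !fan_axis //.
by case: v => [[j b]|].
Qed.

Lemma aux_ends_apart u v : G u v -> aux_end u v != aux_end v u /\
  ((aux_end u v).1 = (aux_end v u).1 -> (aux_end u v).1 != 0).
Proof.
move=> uv; have [ends_ne vertical] := k4_ends_apart (local_neq uv).
rewrite /aux_end (block_sym uv); split=> //.
exact: contra_neq (@shift_injr _ _ _) ends_ne.
Qed.

Lemma aux_arc_interior u v t : G u v -> 0 < t < 1 ->
  0 < (segment (aux_end u v) (aux_end v u) t).1 /\
  forall w, segment (aux_end u v) (aux_end v u) t != aux_end (Some w) (Some w).
Proof.
move=> uv t01; have [x_pos not_corner] := k4_arc_interior (local_neq uv) t01.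
have t01' : 0 <= t <= 1 by move: t01 => /andP[? ?]; apply/andP; split; lra.
rewrite aux_segment //; split=> // -[j b]; apply/eqP.
move=> /(shift_inj (k4_arc_height (local_neq uv) t01') (corner_height b)) [_ /eqP].
exact/negP/not_corner.
Qed.

Lemma aux_arc_cross u v u' v' s t :
  G u v -> G u' v' -> [set u; v] != [set u'; v'] -> 0 <= s <= 1 -> 0 <= t <= 1 ->
  segment (aux_end u v) (aux_end v u) s = segment (aux_end u' v') (aux_end v' u') t ->
  s = 0 \/ s = 1.
Proof.
move=> uv uv' edge_ne s01 t01.
have vu : G v u by rewrite Gl_adj_sym.
have vu' : G v' u' by rewrite Gl_adj_sym.
rewrite !aux_segment //.
have heights := shift_inj (k4_arc_height (local_neq uv) s01)
                         (k4_arc_height (local_neq uv') t01).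
move=> /heights [block_eq arc_eq].
have same_local : ~~ ((local u == local u') && (local v == local v')).
  apply: contra edge_ne => /andP[/eqP lu /eqP lv].
  rewrite (vertex_of_block_local uv uv' block_eq lu).
  by rewrite (vertex_of_block_local vu vu' _ lv) // (block_sym uv) (block_sym uv').
have flipped_local : ~~ ((local u == local v') && (local v == local u')).
  apply: contra edge_ne => /andP[/eqP lu /eqP lv]; rewrite finset.setUC.
  rewrite (vertex_of_block_local uv vu' _ lu) ?(block_sym uv') //.
  by rewrite (vertex_of_block_local vu uv' _ lv) ?(block_sym uv).
exact: k4_arc_cross (local_neq uv) (local_neq uv') same_local flipped_local
  s01 t01 arc_eq.
Qed.

Lemma vertex_point_inj : injective vertex_point.
Proof.
have corner_x_pos a : (corner a).1 != 0.
  by apply: lt0r_neq0; rewrite /corner /=; case: ifP => _; lra.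
move=> [[i a]|] [[j b]|] //.
- move=> /(@fan_inj_off_axis (shift i (corner a)) _ (corner_x_pos a)).
  move=> /(shift_inj (corner_height a) (corner_height b)) [/val_inj <-] [_].
  by move=> /eqP; rewrite eqr_nat => /eqP /val_inj ->.
- rewrite /vertex_point [RHS]fan_axis // => -[/eqP].
  by rewrite (negbTE (corner_x_pos a)).
- rewrite /vertex_point [LHS]fan_axis // => -[/esym/eqP].
  by rewrite (negbTE (corner_x_pos b)).
Qed.

Lemma Gl_planar : planar G.
Proof.
exists vertex_point, edge_arc; split; [exact: vertex_point_inj | split].
  move=> u v uv; have [ends_ne vertical] := aux_ends_apart uv; split.
  - exact/continuous_subspaceT/continuous_fan_segment.
  - by move=> s t _ _; exact: injective_fan_segment.
  - by rewrite /edge_arc /= segment0 fan_aux_end.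
  - by rewrite /edge_arc /= segment1 fan_aux_end.
  move=> t t01 [w|]; have [x_pos not_corner] := aux_arc_interior uv t01; apply/eqP.
    rewrite /edge_arc /vertex_point /= => /(fan_inj_off_axis (lt0r_neq0 x_pos)).
    exact/eqP/not_corner.
  rewrite /edge_arc /vertex_point [RHS]fan_axis // => /(congr1 fst) /= x0.
  by move: x_pos; rewrite /= x0 ltxx.
move=> u v u' v' uv uv' edge_ne s t s01 t01; rewrite /edge_arc /=.
have [axis _|off_axis] := eqVneq (segment (aux_end u v) (aux_end v u) s).1 0.
  by exists None; rewrite /vertex_point !fan_axis.
move=> /(fan_inj_off_axis off_axis) /(aux_arc_cross uv uv' edge_ne s01 t01) [] ->.
  by exists u; rewrite segment0 fan_aux_end.
by exists v; rewrite segment1 fan_aux_end.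
Qed.

End Drawing.

End Planarity.

Theorem mainTheorem7 :
  (forall l : nat, 2 <= l ->
     planar (@Gl_adj l) /\ local_metric_dim (@Gl_adj l) = 2 * l) /\
  (exists (T : finType) (e : rel T),
     [/\ simple_graph e, graph_connected e, planar e &
         (#|T| + 2) %/ 2 < local_metric_dim e]).
Proof.
split=> [l l_ge2|]; first by split; [exact: Gl_planar | exact: Gl_local_metric_dim].
exists (Gl_vertex 4), (@Gl_adj 4); split.
- by split; [exact: Gl_adj_irrefl | exact: Gl_adj_sym].
- exact: Gl_connected.
- exact: Gl_planar.
- by rewrite Gl_local_metric_dim // card_option card_prod !card_ord.
Qed.
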